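(* Let $(Y^*,Y,X,W)$ be random variables with $Y^*,Y\in\{0,1\}$, $X=(\tilde X,Z)$ with $\tilde X\in\tilde{\mathcal X}$, $Z$ taking values in a finite set $\mathcal Z$, and $W$ taking values in a finite set of reals $\mathcal W$ with maximum element $w_m$. Let $p^*(x)=\Pr(Y^*=1\mid X=x)$, write $p^*(\tilde x,z)=p^*(x)$ for $x=(\tilde x,z)$, and $p_W(\tilde x,z,w)=\Pr(Y=1\mid \tilde X=\tilde x,Z=z,W=w)$. Assume: (1) (Exclusion) for all $x=(\tilde x,z)$, $w\in\mathcal W$, $y\in\{0,1\}$: $\Pr(Y^*=1\mid x,w)=p^*(x)$ and $\Pr(Y=1-y\mid Y^*=y,x,w)=\Pr(Y=1-y\mid Y^*=y,\tilde x,w)$; (2) (Degree of misreporting) for all $\tilde x,w$: $\Pr(Y=0\mid Y^*=1,\tilde x,w)+\Pr(Y=1\mid Y^*=0,\tilde x,w)\le1$; (3) (Monotonicity and relevance) for all $\tilde x$, $w_1>w_2$ in $\mathcal W$ and $y\in\{0,1\}$: $\Pr(Y=1-y\mid Y^*=y,\tilde x,w_1)\le\Pr(Y=1-y\mid Y^*=y,\tilde x,w_2)$, and there exists $y\in\{0,1\}$ for which this inequality is strict; (4) (Relevance) for every $\tilde x$ there exist $z_1\neq z_2$ in $\mathcal Z$ with $p^*(\tilde x,z_1)\ne p^*(\tilde x,z_2)$. For $\tilde x$ fixed, with $z_1,z_2$ as in (4), define for $w\in\mathcal W$ $$q_1(\tilde x,w_m,w)=\frac{p_W(\tilde x,z_1,w_m)-p_W(\tilde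 x,z_2,w_m)}{p_W(\tilde x,z_1,w)-p_W(\tilde x,z_2,w)},\qquad R(\tilde x,w)=\frac{q_1(\tilde x,w_m,w)p_W(\tilde x,z_1,w)-p_W(\tilde x,z_1,w_m)}{q_1(\tilde x,w_m,w)-1},$$ and $$U_{\alpha_1}(\tilde x,w_m)=1-\sup_{z\in\mathcal Z,\ w<w_m}\{R(\tilde x,w),\ p_W(\tilde x,z,w_m)\},\qquad U_{\alpha_0}(\tilde x,w_m)=\inf_{z\in\mathcal Z,\ w<w_m}\{R(\tilde x,w),\ p_W(\tilde x,z,w_m)\}.$$ Then for every $\tilde x\in\tilde{\mathcal X}$ and $y\in\{0,1\}$, $\Pr(Y=1-y\mid Y^*=y,\tilde x,w_m)\in[0,U_{\alpha_y}(\tilde x,w_m)]$.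
   Context: $Y^*$ is the true (unobserved) binary outcome and $Y$ the observed, possibly misreported outcome; $Z$ is an instrument for the true outcome and $W$ an instrument for the misreporting probabilities. Conditioning on $\tilde x,w$ means conditioning on $\tilde X=\tilde x,W=w$. The sup/inf in $U_{\alpha_y}$ is over all values $R(\tilde x,w)$ with $w\in\mathcal W$, $w<w_m$, together with all values $p_W(\tilde x,z,w_m)$, $z\in\mathcal Z$. *)

From HB Require Import structures.
From mathcomp Require Import all_boot all_order all_algebra.
From mathcomp Require Import boolp classical_sets reals.
Set Implicit Arguments. Unset Strict Implicit. Unset Printing Implicit Defensive.
Import Order.TTheory GRing.Theory Num.Theory.
Local Open Scope ring_scope.
Local Open Scope classical_set_scope.

(* For every
   value xt, [P xt] is the conditional joint probability mass function of
   (Y*, Y, Z, W) given X~ = xt, over the finite space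
   Obs = bool * bool * Z * W, with the coordinates (Y*, Y, Z, W).
   W is a finite type whose elements are labelled by distinct reals [wv]. *)

Section Model.
Variables (R : realType) (Xt : Type) (Z W : finType).
Variable P : Xt -> bool * bool * Z * W -> R.

Definition obs := (bool * bool * Z * W)%type.
Definition ystar (e : obs) : bool := e.1.1.1.
Definition yobs (e : obs) : bool := e.1.1.2.
Definition zof (e : obs) : Z := e.1.2.
Definition wof (e : obs) : W := e.2.

Definition prob (xt : Xt) (A : pred obs) : R := \sum_(e : obs | A e) P xt e.

(* Pr(A | B, X~ = xt)  (ratio definition; division by 0 gives 0) *)
Definition cprob (xt : Xt) (A B : pred obs) : R :=
  prob xt (predI A B) / prob xt B.

Definition pstar (xt : Xt) (z : Z) : R :=
  cprob xt (fun e => ystar e) (fun e => zof e == z).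

Definition pstar_w (xt : Xt) (z : Z) (w : W) : R :=
  cprob xt (fun e => ystar e) (fun e => (zof e == z) && (wof e == w)).

Definition miscl_xzw (y : bool) (xt : Xt) (z : Z) (w : W) : R :=
  cprob xt (fun e => yobs e != y)
    (fun e => [&& ystar e == y, zof e == z & wof e == w]).

Definition alpha (y : bool) (xt : Xt) (w : W) : R :=
  cprob xt (fun e => yobs e != y) (fun e => (ystar e == y) && (wof e == w)).

Definition pW (xt : Xt) (z : Z) (w : W) : R :=
  cprob xt (fun e => yobs e) (fun e => (zof e == z) && (wof e == w)).

Definition q1 (z1 z2 : Z) (xt : Xt) (wm w : W) : R :=
  (pW xt z1 wm - pW xt z2 wm) / (pW xt z1 w - pW xt z2 w).

Definition Rfun (z1 z2 : Z) (xt : Xt) (wm w : W) : R :=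
  (q1 z1 z2 xt wm w * pW xt z1 w - pW xt z1 wm) / (q1 z1 z2 xt wm w - 1).

Variable wv : W -> R.

Definition Uset (z1 z2 : Z) (xt : Xt) (wm : W) : set R :=
  [set r | (exists w : W, wv w < wv wm /\ r = Rfun z1 z2 xt wm w)
           \/ (exists z : Z, r = pW xt z wm)].

Definition U_alpha (y : bool) (z1 z2 : Z) (xt : Xt) (wm : W) : R :=
  if y then 1 - sup (Uset z1 z2 xt wm) else inf (Uset z1 z2 xt wm).

End Model.

(** Given [X~ = xt], [Z = z] and [W = w], the observed outcome is a mixture:
  by total probability and exclusion,
  [p_W(z, w) = p*(z) (1 - a1(w)) + (1 - p*(z)) a0(w)], where [a_y(w)] is the
  misreporting rate of [Y* = y].  When [a0 + a1 <= 1] such a mixture lies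
  between [a0] and [1 - a1]; this bounds each [p_W(z, w_m)].  In [q1] the
  factor [p*(z1) - p*(z2)] cancels, and [R(w)] turns out to be a mixture at
  [w_m] again, with weight [d0 / (d0 + d1)] where [d_y = a_y(w) - a_y(w_m)];
  by monotonicity (3) this weight lies in [[0, 1]].  So every element of the
  set defining [U_alpha] lies in [[a0(w_m), 1 - a1(w_m)]]. *)

From HB Require Import structures.
From mathcomp Require Import all_boot all_order all_algebra.
From mathcomp Require Import boolp classical_sets reals.
From mathcomp Require Import ring lra.

Set Implicit Arguments. Unset Strict Implicit. Unset Printing Implicit Defensive.
Import Order.TTheory GRing.Theory Num.Theory.
Local Open Scope ring_scope.

Section Mixture.
Variable R : realFieldType.

Definition mixture (p a0 a1 : R) : R := p * (1 - a1) + (1 - p) * a0.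

Lemma mixture_between (p a0 a1 : R) :
  0 <= p <= 1 -> a0 + a1 <= 1 -> a0 <= mixture p a0 a1 <= 1 - a1.
Proof.
by move=> /andP[p_ge0 p_le1] a_le1; apply/andP; split; rewrite /mixture; nra.
Qed.

Lemma mixtureBl (p1 p2 a0 a1 : R) :
  mixture p1 a0 a1 - mixture p2 a0 a1 = (p1 - p2) * (1 - a0 - a1).
Proof. by rewrite /mixture; ring. Qed.

(** [Rfun] after [pW_mixture]: [a] are the misreporting rates at [w], [b]
  those at [w_m]. *)
Definition mixture_ratio (p1 p2 a0 a1 b0 b1 : R) : R :=
  let q := (mixture p1 b0 b1 - mixture p2 b0 b1) /
           (mixture p1 a0 a1 - mixture p2 a0 a1) in
  (q * mixture p1 a0 a1 - mixture p1 b0 b1) / (q - 1).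

(* The denominator of [q] vanishes, so [q = 0] by the convention [x / 0 = 0]. *)
Lemma mixture_ratio_degenerate (p1 p2 a0 a1 b0 b1 : R) :
  a0 + a1 = 1 -> mixture_ratio p1 p2 a0 a1 b0 b1 = mixture p1 b0 b1.
Proof.
move=> a_eq1; rewrite /mixture_ratio !mixtureBl.
have -> : 1 - a0 - a1 = 0 by rewrite -addrA -opprD a_eq1 subrr.
by rewrite mulr0 invr0 mulr0 mul0r sub0r add0r invrN1 mulrN1 opprK.
Qed.

Lemma mixture_ratio_mixture (p1 p2 a0 a1 b0 b1 : R) :
  p1 != p2 -> a0 + a1 != 1 -> (a0 - b0) + (a1 - b1) != 0 ->
  mixture_ratio p1 p2 a0 a1 b0 b1 =
  mixture ((a0 - b0) / ((a0 - b0) + (a1 - b1))) b0 b1.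
Proof.
move=> p12 a_neq1 gap_neq0; rewrite /mixture_ratio !mixtureBl.
have p12' : p1 - p2 != 0 by rewrite subr_eq0.
have a_neq1' : 1 - a0 - a1 != 0 by rewrite -addrA -opprD subr_eq0 eq_sym.
by rewrite /mixture; field; rewrite gap_neq0 a_neq1' p12'.
Qed.

Lemma mixture_ratio_between (p1 p2 a0 a1 b0 b1 : R) :
  0 <= p1 <= 1 -> p1 != p2 -> b0 + b1 <= 1 ->
  b0 <= a0 -> b1 <= a1 -> (b0 < a0) || (b1 < a1) ->
  b0 <= mixture_ratio p1 p2 a0 a1 b0 b1 <= 1 - b1.
Proof.
move=> p1_01 p12 b_le1 b0_le b1_le b_lt.
have [a_eq1 | a_neq1] := eqVneq (a0 + a1) 1.
  by rewrite mixture_ratio_degenerate //; apply: mixture_between.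
have gap_gt0 : 0 < (a0 - b0) + (a1 - b1).
  by case/orP: b_lt => b_lt; lra.
rewrite mixture_ratio_mixture ?(gt_eqF gap_gt0) //; apply: mixture_between => //.
apply/andP; split; first by apply: divr_ge0; lra.
by rewrite ler_pdivrMr // mul1r; lra.
Qed.

End Mixture.

Section Probability.
Variables (R : realType) (Xt : Type) (Z W : finType).
Variables (P : Xt -> bool * bool * Z * W -> R) (xt : Xt).
Hypothesis P_ge0 : forall e, 0 <= P xt e.

Lemma eq_prob (A B : pred (obs Z W)) : A =1 B -> prob P xt A = prob P xt B.
Proof. by move=> eqAB; apply: eq_bigl. Qed.

Lemma eq_cprob (A A' B B' : pred (obs Z W)) :
  A =1 A' -> B =1 B' -> cprob P xt A B = cprob P xt A' B'.
Proof.
move=> eqA eqB; rewrite /cprob (eq_prob eqB); congr (_ / _).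
by apply: eq_prob => e /=; rewrite eqA eqB.
Qed.

Lemma prob_ge0 (A : pred (obs Z W)) : 0 <= prob P xt A.
Proof. exact: sumr_ge0. Qed.

Lemma probID (C B : pred (obs Z W)) :
  prob P xt B = prob P xt (predI C B) + prob P xt (predI (predC C) B).
Proof.
rewrite /prob (bigID C) /=; congr (_ + _); apply: eq_bigl => e.
  by rewrite andbC.
by rewrite andbC.
Qed.

Lemma cprob_ge0 (A B : pred (obs Z W)) : 0 <= cprob P xt A B.
Proof. by apply: divr_ge0; apply: prob_ge0. Qed.

Lemma cprob_le1 (A B : pred (obs Z W)) : cprob P xt A B <= 1.
Proof.
have [B0 | B_neq0] := eqVneq (prob P xt B) 0.
  by rewrite /cprob B0 invr0 mulr0.
have AB_le_B : prob P xt (predI A B) <= prob P xt B.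
  by rewrite (probID A B) lerDl prob_ge0.
by rewrite /cprob ler_pdivrMr ?mul1r // lt_def B_neq0 prob_ge0.
Qed.

Lemma cprobC (A B : pred (obs Z W)) :
  0 < prob P xt B -> cprob P xt (predC A) B = 1 - cprob P xt A B.
Proof.
move=> B_gt0; rewrite /cprob.
have -> : prob P xt (predI (predC A) B) = prob P xt B - prob P xt (predI A B).
  by rewrite (probID A B) addrC addKr.
by rewrite mulrBl divff // lt0r_neq0.
Qed.

Lemma total_probability (A B C : pred (obs Z W)) :
  0 < prob P xt (predI C B) -> 0 < prob P xt (predI (predC C) B) ->
  cprob P xt A B = cprob P xt C B * cprob P xt A (predI C B)
                 + cprob P xt (predC C) B * cprob P xt A (predI (predC C) B).
Proof.
move=> CB_gt0 CcB_gt0.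
have B_gt0 : 0 < prob P xt B by rewrite (probID C B) addr_gt0.
rewrite /cprob (probID C (predI A B)).
rewrite (@eq_prob (predI C (predI A B)) (predI A (predI C B))); last first.
  by move=> e /=; rewrite andbCA.
rewrite (@eq_prob (predI (predC C) (predI A B))
                  (predI A (predI (predC C) B))); last first.
  by move=> e /=; rewrite andbCA.
by field; rewrite !lt0r_neq0.
Qed.

Hypothesis cell_pos : forall (y : bool) (z : Z) (w : W),
  0 < prob P xt (fun e => [&& ystar e == y, zof e == z & wof e == w]).
Hypothesis exclusion_true :
  forall z w, pstar_w P xt z w = pstar P xt z.
Hypothesis exclusion_miscl :
  forall z w y, miscl_xzw P y xt z w = alpha P y xt w.

Lemma pW_mixture (z : Z) (w : W) :
  pW P xt z w = mixture (pstar P xt z) (alpha P false xt w) (alpha P true xt w).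
Proof.
pose ZW := fun e : obs Z W => (zof e == z) && (wof e == w).
have cell_gt0 (C : pred (obs Z W)) y : C =1 (fun e => ystar e == y) ->
    0 < prob P xt (predI C ZW).
  move=> eqC; rewrite (@eq_prob _
    (fun e => [&& ystar e == y, zof e == z & wof e == w])) //.
  by move=> e /=; rewrite eqC.
have ZW1_gt0 := cell_gt0 (@ystar Z W) true (fun e => esym (eqb_id _)).
have ZW0_gt0 := cell_gt0 (predC (@ystar Z W)) false (fun e => esym (eqbF_neg _)).
have ZW_gt0 : 0 < prob P xt ZW by rewrite (probID (@ystar Z W) ZW) addr_gt0.
have pstarE : cprob P xt (@ystar Z W) ZW = pstar P xt z.
  by rewrite -(exclusion_true z w).
have alpha1E :
    cprob P xt (@yobs Z W) (predI (@ystar Z W) ZW) = 1 - alpha P true xt w.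
  rewrite -(exclusion_miscl z w true) /miscl_xzw -cprobC //.
  by apply: eq_cprob => e /=; rewrite ?negbK ?eqb_id.
have alpha0E :
    cprob P xt (@yobs Z W) (predI (predC (@ystar Z W)) ZW) = alpha P false xt w.
  rewrite -(exclusion_miscl z w false).
  by apply: eq_cprob => e /=; rewrite eqbF_neg ?negbK.
rewrite /pW (total_probability _ ZW1_gt0 ZW0_gt0) cprobC //.
by rewrite pstarE alpha1E alpha0E.
Qed.

End Probability.

Theorem lemma1 (R : realType) (Xt : Type) (Z W : finType)
  (P : Xt -> bool * bool * Z * W -> R) (wv : W -> R) (wm : W)
  (* P xt is a probability mass function for each xt *)
  (P_ge0 : forall xt e, 0 <= P xt e)
  (P_sum1 : forall xt, \sum_(e : bool * bool * Z * W) P xt e = 1)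
  (* all conditioning events have positive probability *)
  (P_pos : forall xt (y : bool) (z : Z) (w : W),
     0 < prob P xt (fun e => [&& ystar e == y, zof e == z & wof e == w]))
  (* W is a finite set of reals with maximum element wm *)
  (wv_inj : injective wv)
  (wm_max : forall w, wv w <= wv wm)
  (* (1) exclusion *)
  (H1a : forall xt z w, pstar_w P xt z w = pstar P xt z)
  (H1b : forall xt z w y, miscl_xzw P y xt z w = alpha P y xt w)
  (* (2) degree of misreporting *)
  (H2 : forall xt w, alpha P true xt w + alpha P false xt w <= 1)
  (* (3) monotonicity and relevance *)
  (H3a : forall xt (w1 w2 : W) (y : bool), wv w2 < wv w1 ->
     alpha P y xt w1 <= alpha P y xt w2)
  (H3b : forall xt (w1 w2 : W), wv w2 < wv w1 ->
     exists y : bool, alpha P y xt w1 < alpha P y xt w2)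
  (* (4) relevance *)
  (H4 : forall xt, exists z1 z2 : Z, z1 != z2 /\ pstar P xt z1 != pstar P xt z2) :
  forall (xt : Xt) (z1 z2 : Z), z1 != z2 -> pstar P xt z1 != pstar P xt z2 ->
  forall y : bool,
    0 <= alpha P y xt wm <= U_alpha P wv y z1 z2 xt wm.
Proof.
move=> xt z1 z2 _ p12 y.
have pW_mix := pW_mixture (P_pos xt) (H1a xt) (H1b xt).
have pstar_01 z : 0 <= pstar P xt z <= 1.
  by rewrite (cprob_ge0 (P_ge0 xt)) (cprob_le1 (P_ge0 xt)).
have b_le1 : alpha P false xt wm + alpha P true xt wm <= 1 by rewrite addrC H2.
have Uset_between r : Uset P wv z1 z2 xt wm r ->
    alpha P false xt wm <= r <= 1 - alpha P true xt wm.
  case=> [[w [w_lt ->]] | [z ->]]; last by rewrite pW_mix mixture_between.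
  rewrite /Rfun /q1 !pW_mix; apply: mixture_ratio_between => //; try exact: H3a.
  by have [[] a_lt] := H3b xt wm w w_lt; rewrite a_lt ?orbT.
have Uset_neq0 : (Uset P wv z1 z2 xt wm !=set0)%classic.
  by exists (pW P xt z1 wm); right; exists z1.
rewrite (cprob_ge0 (P_ge0 xt)) /=; case: y; rewrite /U_alpha.
  suff : sup (Uset P wv z1 z2 xt wm) <= 1 - alpha P true xt wm by lra.
  by apply: ge_sup => // r /Uset_between /andP[].
by apply: lb_le_inf => // r /Uset_between /andP[].
Qed.
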